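(* Let $S$ be a finite set of red and blue points in the plane in general position, containing at least one point of each color. Then every minimum bichromatic spanning tree of $S$ is quasi-plane, i.e., it does not contain three edges that pairwise cross.
   Context: A set of points is in general position if no three of them are collinear. A bichromatic spanning tree of a set $S$ of red and blue points is a spanning tree on vertex set $S$, drawn with straight-line segment edges, in which every edge has one red and one blue endpoint. A minimum bichromatic spanning tree (MinBST) is a bichromatic spanning tree of minimum total Euclidean edge length. Two edges (segments) cross if they share a point that is interior to both segments. A straight-line drawing is quasi-plane if no three of its edges pairwise cross. *)

From HB Require Import structures.
From mathcomp Require Import all_boot all_order all_algebra.
Set Implicit Arguments. Unset Strict Implicit. Unset Printing Implicit Defensive.
Import Order.TTheory GRing.Theory Num.Theory.
Local Open Scope ring_scope.

Section Geometry.
Variable R : rcfType.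

Definition pt := (R * R)%type.

Definition dist (a b : pt) : R :=
  Num.sqrt ((a.1 - b.1) ^+ 2 + (a.2 - b.2) ^+ 2).

Definition collinear (a b c : pt) : Prop :=
  (b.1 - a.1) * (c.2 - a.2) - (b.2 - a.2) * (c.1 - a.1) = 0.

Definition seg_cross (a b c d : pt) : Prop :=
  exists t u : R, [/\ 0 < t < 1, 0 < u < 1,
    a.1 + t * (b.1 - a.1) = c.1 + u * (d.1 - c.1) &
    a.2 + t * (b.2 - a.2) = c.2 + u * (d.2 - c.2)].

End Geometry.

Section Trees.
Variable T : finType.

(* Edges are stored as ordered pairs (red endpoint, blue endpoint);
   col x = true means x is red. *)
Definition adj (E : {set T * T}) : rel T :=
  [rel x y | ((x, y) \in E) || ((y, x) \in E)].

Definition connected_graph (E : {set T * T}) : Prop :=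
  forall x y : T, connect (adj E) x y.

Definition acyclic_graph (E : {set T * T}) : Prop :=
  forall c : seq T, (3 <= size c)%N -> uniq c -> ~~ cycle (adj E) c.

Definition is_spanning_tree (E : {set T * T}) : Prop :=
  connected_graph E /\ acyclic_graph E.

Definition bichromatic_edges (col : T -> bool) (E : {set T * T}) : Prop :=
  forall e, e \in E -> col e.1 = true /\ col e.2 = false.

Definition is_bst (col : T -> bool) (E : {set T * T}) : Prop :=
  bichromatic_edges col E /\ is_spanning_tree E.

Variable R : rcfType.

Definition tree_length (p : T -> pt R) (E : {set T * T}) : R :=
  \sum_(e in E) dist (p e.1) (p e.2).

Definition is_minbst (p : T -> pt R) (col : T -> bool) (E : {set T * T}) : Prop :=
  is_bst col E /\
  forall F : {set T * T}, is_bst col F -> tree_length p E <= tree_length p F.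

Definition general_position (p : T -> pt R) : Prop :=
  injective p /\
  forall i j k : T, i != j -> j != k -> i != k -> ~ collinear (p i) (p j) (p k).

Definition edges_cross (p : T -> pt R) (e f : T * T) : Prop :=
  seg_cross (p e.1) (p e.2) (p f.1) (p f.2).

Definition quasi_plane (p : T -> pt R) (E : {set T * T}) : Prop :=
  ~ exists e1 e2 e3 : T * T,
      [/\ e1 \in E, e2 \in E, e3 \in E,
          [/\ e1 != e2, e2 != e3 & e1 != e3] &
          [/\ edges_cross p e1 e2, edges_cross p e2 e3 & edges_cross p e1 e3]].

End Trees.

(* Deleting an edge e = (r, b) from a MinBST splits it into the side of r and
   the side of b, and swapping e for any red-blue pair across that cut cannot
   shorten the tree.  If e and f cross, the triangle inequality through the
   crossing point gives |r_e b_f| + |r_f b_e| < |e| + |f|, so exchange forces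
   f to lie on the red side of e exactly when e lies on the blue side of f.
   For three pairwise crossing edges this orientation is a tournament on three
   vertices.  A cyclic one is refuted by two crossing pairs, which yield
   |g| < |e| < |g|.  In a transitive one, exchange bounds |e| + |f| + |g| by
   a cyclic sum of red-blue distances, which the geometry of three pairwise
   crossing segments makes strictly smaller. *)

From HB Require Import structures.
From mathcomp Require Import all_boot all_order all_algebra.
From mathcomp Require Import lra ring.
From Stdlib Require Import Classical.
Set Implicit Arguments. Unset Strict Implicit. Unset Printing Implicit Defensive.
Import Order.TTheory GRing.Theory Num.Theory.
Local Open Scope ring_scope.

Section PlaneGeometry.
Variable R : rcfType.
Implicit Types (a b c d z : pt R) (s t u : R).

Lemma dist_ge0 a b : 0 <= dist a b.
Proof. exact: sqrtr_ge0. Qed.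

Lemma sqr_dist a b : dist a b ^+ 2 = (a.1 - b.1) ^+ 2 + (a.2 - b.2) ^+ 2.
Proof. by rewrite sqr_sqrtr // addr_ge0 ?sqr_ge0. Qed.

Lemma dist_triangle_sqr a b c : exists w,
  dist a c ^+ 2 = dist a b ^+ 2 + dist b c ^+ 2 + 2 * w /\
  (dist a b * dist b c) ^+ 2 - w ^+ 2 =
    ((b.1 - a.1) * (c.2 - a.2) - (b.2 - a.2) * (c.1 - a.1)) ^+ 2.
Proof.
exists ((b.1 - a.1) * (c.1 - b.1) + (b.2 - a.2) * (c.2 - b.2)).
by rewrite exprMn !sqr_dist; split; ring.
Qed.

Lemma dist_triangle a b c : dist a c <= dist a b + dist b c.
Proof.
have [w [hac hlag]] := dist_triangle_sqr a b c.
have hw : w <= dist a b * dist b c.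
  rewrite (le_trans (ler_norm w)) // -ler_sqr ?nnegrE ?mulr_ge0 ?dist_ge0 //=.
  by rewrite real_normK ?num_real // -subr_ge0 hlag sqr_ge0.
by rewrite -ler_sqr ?nnegrE ?addr_ge0 ?dist_ge0 //; nra.
Qed.

Lemma dist_triangle_lt a b c : ~ collinear a b c -> dist a c < dist a b + dist b c.
Proof.
move=> /eqP ncol; have [w [hac hlag]] := dist_triangle_sqr a b c.
have hw : w < dist a b * dist b c.
  rewrite (le_lt_trans (ler_norm w)) // -ltr_sqr ?nnegrE ?mulr_ge0 ?dist_ge0 //=.
  by rewrite real_normK ?num_real // -subr_gt0 hlag exprn_even_gt0.
by rewrite -ltr_sqr ?nnegrE ?addr_ge0 ?dist_ge0 //; nra.
Qed.

Definition lerp a b t : pt R := (a.1 + t * (b.1 - a.1), a.2 + t * (b.2 - a.2)).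

Lemma lerp0 a b : lerp a b 0 = a.
Proof. by case: a => a1 a2; rewrite /lerp !mul0r !addr0. Qed.

Lemma lerp1 a b : lerp a b 1 = b.
Proof. by case: b => b1 b2; rewrite /lerp !mul1r /=; congr pair; ring. Qed.

Lemma dist_lerp a b s t : dist (lerp a b s) (lerp a b t) = `|s - t| * dist a b.
Proof.
rewrite /dist -sqrtr_sqr -sqrtrM ?sqr_ge0 //; congr Num.sqrt; rewrite /lerp /=; ring.
Qed.

Lemma dist_lerpl a b t : 0 <= t -> dist a (lerp a b t) = t * dist a b.
Proof. by move=> t0; rewrite -{1}(lerp0 a b) dist_lerp sub0r normrN ger0_norm. Qed.

Lemma dist_lerpr a b t : t <= 1 -> dist (lerp a b t) b = (1 - t) * dist a b.
Proof.
by move=> t1; rewrite -{2}(lerp1 a b) dist_lerp distrC ger0_norm ?subr_ge0.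
Qed.

Lemma seg_cross_lerp a b c d : seg_cross a b c d ->
  exists t u, [/\ 0 < t < 1, 0 < u < 1 & lerp a b t = lerp c d u].
Proof. by case=> t [u [ht hu e1 e2]]; exists t, u; rewrite /lerp e1 e2. Qed.

Lemma seg_crossC a b c d : seg_cross a b c d -> seg_cross c d a b.
Proof. by case=> t [u [ht hu e1 e2]]; exists u, t. Qed.

Lemma seg_cross_collinear a b c : seg_cross a b a c -> collinear a b c.
Proof.
case=> t [u [/andP[t0 _] _ e1 e2]]; rewrite /collinear; apply: (mulfI (lt0r_neq0 t0)).
rewrite mulr0.
have {}e1 : t * (b.1 - a.1) = u * (c.1 - a.1) by apply: (addrI a.1).
have {}e2 : t * (b.2 - a.2) = u * (c.2 - a.2) by apply: (addrI a.2).
transitivity (t * (b.1 - a.1) * (c.2 - a.2) - t * (b.2 - a.2) * (c.1 - a.1)).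
  by ring.
by rewrite e1 e2; ring.
Qed.

Lemma noncollinear_lerp z a b t :
  t != 1 -> ~ collinear z a b -> ~ collinear z (lerp a b t) b.
Proof.
move=> t1 ncol col; apply: ncol; rewrite /collinear.
have t1' : 1 - t != 0 by rewrite subr_eq0 eq_sym.
by apply: (mulfI t1'); rewrite mulr0 -col /lerp /=; ring.
Qed.

Lemma dist_cross_lt z c a b s t :
  ~ collinear z a b -> 0 <= s -> t < 1 -> lerp z c s = lerp a b t ->
  dist z b < s * dist z c + (1 - t) * dist a b.
Proof.
move=> ncol s0 t1 q; rewrite -dist_lerpl // q -dist_lerpr ?ltW //.
by apply: dist_triangle_lt; apply: noncollinear_lerp; rewrite ?lt_eqF.
Qed.

Lemma dist_cross_via_lt z c a b g h s t v w :
  ~ collinear z a b -> 0 <= s -> t < 1 ->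
  lerp z c s = lerp g h v -> lerp a b t = lerp g h w ->
  dist z b < s * dist z c + `|v - w| * dist g h + (1 - t) * dist a b.
Proof.
move=> ncol s0 t1 qz qa; rewrite -dist_lerpl // -dist_lerpr ?ltW // -dist_lerp.
apply: (lt_le_trans (dist_triangle_lt (noncollinear_lerp (t := t) _ ncol))).
  by rewrite lt_eqF.
by rewrite qz qa lerD2r dist_triangle.
Qed.

Lemma seg_cross_dist_lt r0 b0 r1 b1 :
  seg_cross r0 b0 r1 b1 -> ~ collinear r0 r1 b1 -> ~ collinear r1 r0 b0 ->
  dist r0 b1 + dist r1 b0 < dist r0 b0 + dist r1 b1.
Proof.
case/seg_cross_lerp => t [u [/andP[t0 t1] /andP[u0 u1] q]] ncol0 ncol1.
have := dist_cross_lt ncol0 (ltW t0) u1 q.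
have := dist_cross_lt ncol1 (ltW u0) t1 (esym q).
by lra.
Qed.

Lemma seg_cross3_dist_lt r0 b0 r1 b1 r2 b2 :
  seg_cross r0 b0 r1 b1 -> seg_cross r1 b1 r2 b2 -> seg_cross r2 b2 r0 b0 ->
  ~ collinear r1 r0 b0 -> ~ collinear r2 r1 b1 -> ~ collinear r0 r2 b2 ->
  dist r1 b0 + dist r2 b1 + dist r0 b2 < dist r0 b0 + dist r1 b1 + dist r2 b2.
Proof.
case/seg_cross_lerp => t01 [t10 [/andP[/ltW p01 q01] /andP[/ltW p10 q10] c01]].
case/seg_cross_lerp => t12 [t21 [/andP[/ltW p12 q12] /andP[/ltW p21 q21] c12]].
case/seg_cross_lerp => t20 [t02 [/andP[/ltW p20 q20] /andP[/ltW p02 q02] c20]].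
move=> ncol0 ncol1 ncol2.
have := dist_cross_lt ncol0 p10 q01 (esym c01).
have := dist_cross_lt ncol1 p21 q12 (esym c12).
have := dist_cross_lt ncol2 p02 q20 (esym c20).
have := dist_cross_via_lt ncol0 p12 q02 c12 (esym c20).
have := dist_cross_via_lt ncol1 p20 q10 c20 (esym c01).
have := dist_cross_via_lt ncol2 p01 q21 c01 (esym c12).
(* Each distance is bounded directly through one crossing point or by a detour
   along the third segment.  Whatever the order of the crossing points along
   the segments, some choice of these bounds adds up to the total length. *)
rewrite !normrEsign; do 3 case: (_ < 0); rewrite ?expr0 ?expr1 ?mul1r ?mulN1r.
all: lra.
Qed.

End PlaneGeometry.

Section Graphs.
Variable T : finType.
Implicit Types (E F : {set T * T}) (e : T * T) (x y u v : T).

Lemma adj_sym E : symmetric (adj E).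
Proof. by move=> x y; rewrite /adj /= orbC. Qed.

Lemma connect_adjC E x y : connect (adj E) x y = connect (adj E) y x.
Proof. exact/sym_connect_sym/adj_sym. Qed.

Lemma adj_subset E F x y : E \subset F -> adj E x y -> adj F x y.
Proof. by move=> /subsetP sEF /orP[/sEF|/sEF] h; rewrite /adj /= h ?orbT. Qed.

Lemma connect_adj_subset E F x y :
  E \subset F -> connect (adj E) x y -> connect (adj F) x y.
Proof. by move=> sEF; apply: connect_sub => u v /(adj_subset sEF)/connect1. Qed.

Lemma adj_setD1 E e u v :
  adj E u v -> [|| adj (E :\ e) u v, (u, v) == e | (v, u) == e].
Proof.
rewrite /adj /= !in_setD1.
by case: ((u, v) == e); case: ((v, u) == e); rewrite /= ?orbT ?orbF.
Qed.

Lemma connected_setD1_subset E F e : connected_graph E -> E :\ e \subset F ->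
  connect (adj F) e.1 e.2 -> connected_graph F.
Proof.
move=> cE sEF ce x y; apply: connect_sub (cE x y) => u v /(adj_setD1 e).
case/or3P=> [h|/eqP huv|/eqP hvu]; first exact: connect_adj_subset (connect1 h).
  by move: ce; rewrite -huv.
by rewrite connect_adjC; move: ce; rewrite -hvu.
Qed.

Lemma connect_setD1_split E e z : connected_graph E ->
  connect (adj (E :\ e)) e.1 z || connect (adj (E :\ e)) e.2 z.
Proof.
move=> cE.
set P := [pred z | connect (adj (E :\ e)) e.1 z || connect (adj (E :\ e)) e.2 z].
have step u v : adj E u v -> P u -> P v.
  case/(adj_setD1 e)/or3P=> [h|/eqP huv|/eqP hvu] Pu.
  - case/orP: Pu => c; apply/orP; [left|right];
      exact: connect_trans c (connect1 h).
  - by rewrite inE -huv connect0 orbT.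
  - by rewrite inE -hvu connect0.
have closedP : closed (adj E) P.
  by move=> u v huv; apply/idP/idP; apply: step; rewrite // adj_sym.
by have := closed_connect closedP (cE e.1 z); rewrite !inE connect0 => <-.
Qed.

Lemma connected_exchange E F e x y : connected_graph E -> E :\ e \subset F ->
  adj F x y -> connect (adj (E :\ e)) e.1 x != connect (adj (E :\ e)) e.1 y ->
  connected_graph F.
Proof.
move=> cE sF Fxy hxy; apply: (connected_setD1_subset cE sF).
wlog [ex ny] : x y Fxy {hxy} /
    connect (adj (E :\ e)) e.1 x /\ ~~ connect (adj (E :\ e)) e.1 y.
  move=> wl; move: hxy; case ex: (connect _ e.1 x); case ey: (connect _ e.1 y) => // _.
    by apply: (wl x y Fxy); rewrite ex ey.
  by apply: (wl y x); rewrite 1?adj_sym ?ex ?ey.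
have := connect_setD1_split e y cE; rewrite (negbTE ny) /= => e2y.
apply: connect_trans (connect_adj_subset sF ex) (connect_trans (connect1 Fxy) _).
by rewrite connect_adjC (connect_adj_subset sF e2y).
Qed.

Lemma cycle_edge_redundant E c : (3 <= size c)%N -> uniq c -> cycle (adj E) c ->
  exists2 e, e \in E & connect (adj (E :\ e)) e.1 e.2.
Proof.
case: c => [|x [|y [|z s]]] //= _ /and3P[xnin ynin _] /andP[hxy pth].
have [e eE ee] : exists2 e, e \in E & e \in [:: (x, y); (y, x)].
  by case/orP: hxy => h; [exists (x, y) | exists (y, x)]; rewrite ?inE ?eqxx ?orbT.
have off w v : w \notin [:: x; y] -> adj E w v -> adj (E :\ e) w v.
  move=> wnin /(adj_setD1 e)/or3P[//|/eqP we|/eqP we]; move: ee wnin;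
    rewrite -we !inE !xpair_eqE => /orP[]/andP[/eqP-> /eqP->];
    by rewrite eqxx ?orbT.
have inner : all [predC [:: x; y]] (z :: s).
  apply/allP=> w ws; rewrite !inE; apply/norP; split; apply/eqP=> ew; subst w.
    by move: xnin; rewrite in_cons ws orbT.
  by move: ynin; rewrite ws.
move: pth; rewrite rcons_path => /and3P[yz pzs lx].
have zs_path : path (adj (E :\ e)) z s.
  by apply: (sub_in_path _ inner pzs) => u v unin _; exact: off.
have zin : z \notin [:: x; y] := allP inner z (mem_head z s).
have lin : last z s \notin [:: x; y] := allP inner _ (mem_last z s).
have cyx : connect (adj (E :\ e)) y x.
  have zs := path_connect zs_path (mem_last z s).
  apply: connect_trans (connect1 _) (connect_trans zs _).
    by rewrite adj_sym off // adj_sym.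
  exact/connect1/off.
exists e => //.
by move: ee cyx; rewrite !inE => /orP[]/eqP-> //=; rewrite connect_adjC.
Qed.

Lemma exists_spanning_subtree F : connected_graph F ->
  exists2 F' : {set T * T}, F' \subset F & is_spanning_tree F'.
Proof.
have [n] := ubnP #|F|; elim: n F => // n IH F ltFn cF.
have [acF|[c [c3 uc cyc]]] : acyclic_graph F \/
    exists c, [/\ (3 <= size c)%N, uniq c & cycle (adj F) c].
  have [cyc|nc] := classic (exists c, [/\ (3 <= size c)%N, uniq c & cycle (adj F) c]).
    by right.
  by left=> c c3 uc; apply/negP=> cyc; apply: nc; exists c.
  by exists F; last split.
have [e eF ce] := cycle_edge_redundant c3 uc cyc.
have ltFen : (#|F :\ e| < n)%N by rewrite (cardsD1 e F) eF in ltFn.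
have [F' sF' tF'] := IH _ ltFen (connected_setD1_subset cF (subxx _) ce).
by exists F' => //; apply: subset_trans sF' (subsetDl _ _).
Qed.

Lemma acyclic_edge_cut E e : acyclic_graph E -> e \in E -> e.1 != e.2 ->
  (e.2, e.1) \notin E -> connect (adj (E :\ e)) e.1 e.2 = false.
Proof.
case: e => x y acE eE /= nxy nyx; apply/negP=> /connectP[s0 p0 l0].
case/shortenP: p0 l0 => s ps us _ ly; subst y.
case: s ps us eE nxy nyx => [|w [|w' s]] ps us eE nxy nyx.
- by rewrite eqxx in nxy.
- by move: ps => /=; rewrite andbT /adj /= !in_setD1 eqxx (negbTE nyx) andbF.
apply: (negP (acE [:: x, w, w' & s] isT us)); rewrite /cycle rcons_path.
rewrite (sub_path _ ps) => [|u v]; last exact/adj_subset/subsetDl.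
by rewrite /adj /= eE orbT.
Qed.
End Graphs.

Section TreeLength.
Variables (R : rcfType) (T : finType) (p : T -> pt R).
Implicit Types (A B : {set T * T}) (f : T * T).

Lemma tree_length_subset A B : A \subset B -> tree_length p A <= tree_length p B.
Proof.
move=> sAB; rewrite /tree_length [leRHS](big_setID A) /= (setIidPr sAB) lerDl.
by apply: sumr_ge0 => e _; apply: dist_ge0.
Qed.

Lemma tree_length_setU1 A f :
  tree_length p (f |: A) <= dist (p f.1) (p f.2) + tree_length p A.
Proof.
rewrite /tree_length; have [fA|fA] := boolP (f \in A); last by rewrite big_setU1.
by rewrite (setUidPr _) ?sub1set // lerDr dist_ge0.
Qed.

Lemma tree_length_setD1 A f : f \in A ->
  tree_length p A = dist (p f.1) (p f.2) + tree_length p (A :\ f).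
Proof. by move=> fA; rewrite /tree_length (big_setD1 f fA). Qed.
End TreeLength.

Section MinBST.
Variables (R : rcfType) (T : finType) (p : T -> pt R) (col : T -> bool).
Variable E : {set T * T}.
Hypothesis gp : general_position p.
Hypothesis minE : is_minbst p col E.
Implicit Types (e f g : T * T) (x y : T).

Local Notation elen e := (dist (p e.1) (p e.2)).

Definition side e z := connect (adj (E :\ e)) e.1 z.

Lemma edge_colors e : e \in E -> col e.1 /\ col e.2 = false.
Proof. by case: minE => -[bE _] _ /bE. Qed.

Lemma colors_neq x y : col x -> col y = false -> x != y.
Proof. by move=> cx cy; apply: contraFneq cy => <-. Qed.

Lemma side_fst e : side e e.1.
Proof. exact: connect0. Qed.

Lemma side_snd e : e \in E -> side e e.2 = false.
Proof.
move=> eE; have [c1 c2] := edge_colors eE; case: minE => -[_ [_ acE]] _.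
apply: acyclic_edge_cut => //; first exact: colors_neq.
by apply: contraFN c2 => /edge_colors[].
Qed.

Lemma side_edge e f : f \in E -> f != e -> side e f.2 = side e f.1.
Proof.
move=> fE nfe; have f12 : adj (E :\ e) f.1 f.2.
  by rewrite /adj /= -surjective_pairing in_setD1 nfe fE.
by apply/idP/idP => h; apply: connect_trans h (connect1 _); rewrite // adj_sym.
Qed.

Lemma minbst_exchange e x y : e \in E -> col x -> col y = false ->
  side e x != side e y -> elen e <= dist (p x) (p y).
Proof.
move=> eE cx cy hxy; case: minE => -[bE [cE _]] minimal.
set F := (x, y) |: E :\ e.
have cF : connected_graph F.
  by apply: (connected_exchange cE (subsetUr _ _) _ hxy); rewrite /adj /= setU11.
have bF : bichromatic_edges col F.
  by move=> h; rewrite !inE => /orP[/eqP-> | /andP[_ /bE]] //=.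
have [F' sF' tF'] := exists_spanning_subtree cF.
have bF' : bichromatic_edges col F' by move=> h /(subsetP sF')/bF.
have := minimal F' (conj bF' tF').
have := tree_length_subset p sF'; have := tree_length_setU1 p (E :\ e) (x, y).
by rewrite (tree_length_setD1 p eE) /=; lra.
Qed.

Lemma exchange_side e f : e \in E -> f \in E -> f != e ->
  side e f.1 -> elen e <= dist (p f.1) (p e.2).
Proof.
move=> eE fE nfe sf; apply: minbst_exchange; rewrite ?side_snd ?sf //.
  by case: (edge_colors fE).
by case: (edge_colors eE).
Qed.

Lemma exchange_not_side e f : e \in E -> f \in E -> f != e ->
  ~~ side e f.1 -> elen e <= dist (p e.1) (p f.2).
Proof.
move=> eE fE nfe sf; apply: minbst_exchange; rewrite ?side_fst ?side_edge //.
  by case: (edge_colors eE).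
by case: (edge_colors fE).
Qed.

Lemma exchange_split_sides e f g : e \in E -> f \in E -> g \in E ->
  g != e -> side e f.1 != side e g.1 -> elen e <= dist (p f.1) (p g.2).
Proof.
move=> eE fE gE nge sfg; apply: minbst_exchange; rewrite ?side_edge //.
  by case: (edge_colors fE).
by case: (edge_colors gE).
Qed.

Definition crossing_pair e f := [/\ e \in E, f \in E, e != f & edges_cross p e f].

Lemma crossing_pairC e f : crossing_pair e f -> crossing_pair f e.
Proof. by case=> eE fE nef cef; split; rewrite // 1?eq_sym //; apply: seg_crossC. Qed.

Lemma crossing_pair_noncollinear e f :
  crossing_pair e f -> ~ collinear (p e.1) (p f.1) (p f.2).
Proof.
case: gp => _ npcol [eE fE nef cef].
have [ce1 ce2] := edge_colors eE; have [cf1 cf2] := edge_colors fE.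
have [e1f1|ne1f1] := eqVneq e.1 f.1; last first.
  by apply: npcol; rewrite // colors_neq.
(* Crossing edges with a common red endpoint would be collinear. *)
have ne2f2 : e.2 != f.2.
  apply: contraNneq nef => e2f2.
  by rewrite [e]surjective_pairing e1f1 e2f2 -surjective_pairing.
have := npcol _ _ _ (colors_neq ce1 ce2) ne2f2 (colors_neq ce1 cf2); apply: contra_not.
by move: cef; rewrite /edges_cross -e1f1 => /seg_cross_collinear.
Qed.

Lemma crossing_pair_dist_lt e f : crossing_pair e f ->
  dist (p e.1) (p f.2) + dist (p f.1) (p e.2) < elen e + elen f.
Proof.
move=> cef; have [_ _ _ c] := cef.
apply: seg_cross_dist_lt c _ _; apply: crossing_pair_noncollinear => //.
exact: crossing_pairC.
Qed.

Lemma crossing_triple_dist_lt e f g :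
  crossing_pair e f -> crossing_pair f g -> crossing_pair g e ->
  dist (p f.1) (p e.2) + dist (p g.1) (p f.2) + dist (p e.1) (p g.2) <
  elen e + elen f + elen g.
Proof.
move=> cef cfg cge.
have [_ _ _ xef] := cef; have [_ _ _ xfg] := cfg; have [_ _ _ xge] := cge.
apply: seg_cross3_dist_lt xef xfg xge _ _ _; apply: crossing_pair_noncollinear;
  exact: crossing_pairC.
Qed.

Lemma crossing_side_antisym e f : crossing_pair e f -> side f e.1 = ~~ side e f.1.
Proof.
move=> cef; have [eE fE nef _] := cef; have nfe : f != e by rewrite eq_sym.
have := crossing_pair_dist_lt cef.
case sef: (side e f.1); case sfe: (side f e.1) => //=.
  have := exchange_side eE fE nfe sef; have := exchange_side fE eE nef sfe.
  by lra.
have := exchange_not_side eE fE nfe (negbT sef).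
have := exchange_not_side fE eE nef (negbT sfe).
by lra.
Qed.

Lemma no_crossing_triple_chain e f g :
  crossing_pair e f -> crossing_pair f g -> crossing_pair g e ->
  side e f.1 -> side f g.1 -> False.
Proof.
move=> cef cfg cge sef sfg.
have [eE fE nef _] := cef; have [_ gE nfg _] := cfg; have [_ _ nge _] := cge.
have nfe : f != e by rewrite eq_sym.
have ngf : g != f by rewrite eq_sym.
have sfe : side f e.1 = false by rewrite (crossing_side_antisym cef) sef.
have sgf : side g f.1 = false by rewrite (crossing_side_antisym cfg) sfg.
case sge: (side g e.1).
  (* Crossing at (e, f) gives |g| < |e|, crossing at (f, g) gives |e| < |g|. *)
  have seg : side e g.1 = false by rewrite (crossing_side_antisym cge) sge.
  have := crossing_pair_dist_lt cef; have := crossing_pair_dist_lt cfg.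
  have := exchange_split_sides gE eE fE nfg; rewrite sge sgf => /(_ isT).
  have := exchange_split_sides eE fE gE nge; rewrite sef seg => /(_ isT).
  have := exchange_not_side fE eE nef (negbT sfe).
  have := exchange_side fE gE ngf sfg.
  by lra.
have := crossing_triple_dist_lt cef cfg cge.
have := exchange_side eE fE nfe sef.
have := exchange_split_sides fE eE gE ngf; rewrite sfe sfg => /(_ isT).
have := exchange_not_side gE fE nfg (negbT sgf).
by lra.
Qed.

Lemma no_crossing_triple_side_eq e f g :
  crossing_pair e f -> crossing_pair f g -> crossing_pair g e ->
  side e f.1 = side f g.1 -> False.
Proof.
move=> cef cfg cge; case sef: (side e f.1) => sfg.
  exact: no_crossing_triple_chain cef cfg cge sef (esym sfg).
apply: (no_crossing_triple_chain (crossing_pairC cfg) (crossing_pairC cef)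
  (crossing_pairC cge)).
  by rewrite (crossing_side_antisym cfg) -sfg.
by rewrite (crossing_side_antisym cef) sef.
Qed.
End MinBST.

Theorem theorem4 (R : rcfType) (T : finType) (p : T -> pt R) (col : T -> bool)
  (E : {set T * T}) :
  general_position p ->
  (exists r : T, col r) -> (exists b : T, ~~ col b) ->
  is_minbst p col E ->
  quasi_plane p E.
Proof.
move=> gp _ _ minE [e [f [g [eE fE gE [nef nfg neg] [cef cfg ceg]]]]].
have pef : crossing_pair p E e f by [].
have pfg : crossing_pair p E f g by [].
have pge : crossing_pair p E g e by apply: crossing_pairC.
have : [|| side E e f.1 == side E f g.1, side E f g.1 == side E g e.1
         | side E g e.1 == side E e f.1].
  by case: (side E e f.1); case: (side E f g.1); case: (side E g e.1).
case/or3P=> /eqP.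
- exact: (no_crossing_triple_side_eq gp minE pef pfg pge).
- exact: (no_crossing_triple_side_eq gp minE pfg pge pef).
- exact: (no_crossing_triple_side_eq gp minE pge pef pfg).
Qed.
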